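(* Let $\omega$ be a non-principal ultrafilter and $d=(d_n)$ a scaling sequence with $\lim_\omega d_n=\infty$. The inclusion $i:K_2\to G$ induces a bi-Lipschitz embedding $\hat{i}:Con^\omega(K_2,d)\hookrightarrow Con^\omega(G,d)$.
   Context: $G=F_2(a,b)*_{K(a,b)=K(x,y)}F_2(x,y)$ with word metric for $\{a^{\pm1},b^{\pm1},x^{\pm1},y^{\pm1}\}$, where $F_2(a,b)$, $F_2(x,y)$ are copies of the free group of rank 2 and $K(x,y)$ is the image of $K(a,b)$ under $a\mapsto x,b\mapsto y$. $K=\bigcup_nK_n$ with ($|h|$ word length, $(h,k)_1$ Gromov product at $1$, $(h,H)_1=\max_{k\in H}(h,k)_1$, $T(n)$ the tower of $2$'s of height $n$, $U(n)(a,b)=[a^{T(n)+1}b^{T(n)+1}]\cdots[a^{T(n+1)}b^{T(n+1)}]$): $K_1=\langle g_1\rangle$, $g_1$ not a proper power; $K_{n+1}=\langle K_n,g_{n+1}\rangle$ where $g_{n+1}\in F_2\setminus K_n$ is cyclically reduced, no proper power of $a$ or $b$ lies in $K_n$, $(g_{n+1},K_n)_1=\min_{h\in F_2\setminus K_n}(h,K_n)_1$, and $g_{n+1}=h_{n+1}c_{n+1}U(N(n))d_{n+1}$ with $h_{n+1}$ an initial segment of a geodesic ray $r$ from $1$ minimizing $(r,K_n)_1$, $(h_{n+1},K_n)_1$ equal to that minimum, $|h_{n+1}|=(h_{n+1},K_n)_1+1$; $N(n)$ at least twice the maximal $m$ with $a^m$ or $b^m$ a subword of a freely reduced word of $K_n$,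 and $N(n)>|h_{n+1}|$; $c_{n+1},d_{n+1}\in\{a^{\pm1},b^{\pm1}\}$ making $g_{n+1}$ cyclically reduced. $K_2=\langle g_1,g_2\rangle\subset F_2(a,b)\subset G$ is a free group of rank 2, with a word metric for a finite generating set. Asymptotic cones are ultralimits of the metrics scaled by $1/d_n$, based at the identity. *)

From mathcomp Require Import all_boot.
From Stdlib Require Import Reals ClassicalEpsilon.
Set Implicit Arguments. Unset Strict Implicit. Unset Printing Implicit Defensive.

(* A letter (i, s): generator number i (0 = a, 1 = b, 2 = x, 3 = y),
   exponent +1 if s = true, -1 if s = false. *)
Definition letter := (nat * bool)%type.
Definition word := seq letter.

Definition linv (l : letter) : letter := (l.1, ~~ l.2).
Definition winv (w : word) : word := rev (map linv w).

Definition red_step (st : word) (l : letter) : word :=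
  match st with
  | l' :: st' => if l' == linv l then st' else l :: st
  | [::] => [:: l]
  end.
Definition reduce (w : word) : word := rev (foldl red_step [::] w).
Definition reduced (w : word) : Prop := reduce w = w.
Definition mul (u v : word) : word := reduce (u ++ v).

Definition cyc_reduced (w : word) : Prop :=
  reduced w /\ (forall l0, w != [::] -> last l0 w != linv (head l0 w)).

Definition lettersF2 (w : word) : bool := all (fun l => l.1 < 2) w.
Definition lettersF4 (w : word) : bool := all (fun l => l.1 < 4) w.
Definition inF2 (w : word) : Prop := lettersF2 w /\ reduced w.

Definition shiftxy (w : word) : word := map (fun l => (l.1 + 2, l.2)) w.

Definition wpow (w : word) (m : nat) : word := reduce (flatten (nseq m w)).
Definition proper_power (w : word) : Prop :=
  exists (u : word) (m : nat), 2 <= m /\ w = wpow u m.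

Definition evalS (S : seq word) (t : seq (nat * bool)) : word :=
  reduce (flatten (map (fun p => if p.2 then nth [::] S p.1
                                 else winv (nth [::] S p.1)) t)).
Definition in_gen (S : seq word) (w : word) : Prop :=
  exists t : seq (nat * bool), all (fun p => p.1 < size S) t /\ w = evalS S t.

(* least element of a (nonempty) set of naturals; 0 if empty *)
Definition natinf (P : nat -> Prop) : nat :=
  epsilon (inhabits 0%N) (fun m => P m /\ forall m', P m' -> m <= m').

Definition distS (S : seq word) (u v : word) : nat :=
  natinf (fun m => exists t : seq (nat * bool),
            size t = m /\ all (fun p => p.1 < size S) t /\
            evalS S t = mul (winv u) v).

Definition wlen (w : word) : nat := size w.
Definition gprod (h k : word) : nat :=
  (wlen h + wlen k - wlen (mul (winv h) k)) %/ 2.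
Definition gprod_set (H : word -> Prop) (h : word) (m : nat) : Prop :=
  (exists k, H k /\ gprod h k = m) /\ (forall k, H k -> gprod h k <= m).

(* geodesic rays from 1 in the Cayley tree of F_2(a,b): infinite reduced words *)
Definition ray (r : nat -> letter) : Prop :=
  (forall i, (r i).1 < 2) /\ (forall i, r i.+1 != linv (r i)).
Definition prefix (r : nat -> letter) (t : nat) : word := mkseq r t.
(* (r,k)_1 = lim_t (r(t),k)_1 (eventually constant) *)
Definition gprod_ray (r : nat -> letter) (k : word) (m : nat) : Prop :=
  exists T, forall t, T <= t -> gprod (prefix r t) k = m.
Definition gprod_ray_set (H : word -> Prop) (r : nat -> letter) (m : nat) : Prop :=
  (exists k, H k /\ gprod_ray r k m) /\
  (forall k m', H k -> gprod_ray r k m' -> m' <= m).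

Fixpoint tower (n : nat) : nat := if n is n'.+1 then 2 ^ tower n' else 1.
Definition apow (i : nat) : word := nseq i (0, true).
Definition bpow (i : nat) : word := nseq i (1, true).
Definition comm (u v : word) : word := winv u ++ winv v ++ u ++ v.
(* U(n)(a,b) = [a^{T(n)+1}, b^{T(n)+1}] ... [a^{T(n+1)}, b^{T(n+1)}] *)
Definition Uword (n : nat) : word :=
  flatten (map (fun i => comm (apow i) (bpow i))
               (iota (tower n).+1 (tower n.+1 - tower n))).

(* K_n = < g_1, ..., g_n > (g 0 is unused) *)
Definition Kn (g : nat -> word) (n : nat) : word -> Prop :=
  in_gen (map g (iota 1 n)).
Definition Kall (g : nat -> word) (w : word) : Prop := exists n, Kn g n w.

Definition is_max_power (H : word -> Prop) (M : nat) : Prop :=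
  (exists w, H w /\ [|| infix (nseq M (0, true)) w, infix (nseq M (0, false)) w,
                        infix (nseq M (1, true)) w | infix (nseq M (1, false)) w]) /\
  (forall w m, H w -> [|| infix (nseq m (0, true)) w, infix (nseq m (0, false)) w,
                        infix (nseq m (1, true)) w | infix (nseq m (1, false)) w] ->
               m <= M).

Definition construction (g h : nat -> word) (c d : nat -> letter) (N : nat -> nat)
  : Prop :=
  inF2 (g 1) /\ ~ proper_power (g 1) /\
  forall n, 1 <= n ->
    (forall m, 2 <= m -> ~ Kn g n (apow m) /\ ~ Kn g n (bpow m)) /\
    inF2 (g n.+1) /\ ~ Kn g n (g n.+1) /\ cyc_reduced (g n.+1) /\
    (exists m0, gprod_set (Kn g n) (g n.+1) m0 /\
       forall h' m, inF2 h' -> ~ Kn g n h' -> gprod_set (Kn g n) h' m -> m0 <= m) /\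
    (exists (r : nat -> letter) (mr : nat),
       ray r /\ gprod_ray_set (Kn g n) r mr /\
       (forall r' m', ray r' -> gprod_ray_set (Kn g n) r' m' -> mr <= m') /\
       h n.+1 = prefix r (wlen (h n.+1)) /\
       gprod_set (Kn g n) (h n.+1) mr /\ wlen (h n.+1) = mr.+1) /\
    (exists M, is_max_power (Kn g n) M /\ 2 * M <= N n) /\
    wlen (h n.+1) < N n /\
    (c n.+1).1 < 2 /\ (d n.+1).1 < 2 /\
    g n.+1 = h n.+1 ++ c n.+1 :: Uword (N n) ++ [:: d n.+1].

(* normal closure in F(a,b,x,y) of { k psi(k)^-1 : k in K } *)
Inductive relG (g : nat -> word) : word -> Prop :=
| relG_gen k : Kall g k -> relG g (mul k (winv (shiftxy k)))
| relG_nil : relG g [::]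
| relG_mul u v : relG g u -> relG g v -> relG g (mul u v)
| relG_inv u : relG g u -> relG g (winv u)
| relG_conj u w : lettersF4 w -> relG g u -> relG g (reduce (winv w ++ u ++ w)).

Definition distG (g : nat -> word) (u v : word) : nat :=
  natinf (fun m => exists w, size w = m /\ lettersF4 w /\
            relG g (mul (winv w) (mul (winv u) v))).

Definition ultrafilter (U : (nat -> Prop) -> Prop) : Prop :=
  U (fun _ => True) /\ ~ U (fun _ => False) /\
  (forall A B : nat -> Prop, (forall n, A n -> B n) -> U A -> U B) /\
  (forall A B : nat -> Prop, U A -> U B -> U (fun n => A n /\ B n)) /\
  (forall A : nat -> Prop, U A \/ U (fun n => ~ A n)).
Definition nonprincipal (U : (nat -> Prop) -> Prop) : Prop :=
  forall m : nat, ~ U (fun n => n = m).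
Definition ulim (U : (nat -> Prop) -> Prop) (u : nat -> R) (l : R) : Prop :=
  forall eps : R, (0 < eps)%R -> U (fun n => (Rabs (u n - l) < eps)%R).

(* Since K_2 lies in F_2(a,b) and the homomorphism G -> F_2(a,b) sending x to a
   and y to b is a retraction, the distance in G between two elements k, k' of
   F_2(a,b) is their free distance |k^-1 k'|.  Finitely generated subgroups of
   free groups are undistorted: each prefix of the reduced form of a product of
   generators lies within max |s| (s in S) of a partial product, so consecutive
   prefixes yield elements of K_2 at bounded free, hence bounded S-, distance.
   Thus the S-metric and the free metric are bi-Lipschitz on K_2, and dividing by
   d_n and passing to ultralimits (which exist since the ratios are bounded)
   keeps the Lipschitz constants. *)

From Pilot Require Import Defs.
From mathcomp Require Import all_boot zify.
From Stdlib Require Import Reals Classical ClassicalEpsilon Lra Psatz.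
Set Implicit Arguments. Unset Strict Implicit. Unset Printing Implicit Defensive.

Lemma linvK : involutive linv.
Proof. by case=> i s; rewrite /linv /= negbK. Qed.

Lemma eq_linvC l l' : (l == linv l') = (l' == linv l).
Proof. by apply/eqP/eqP => ->; rewrite linvK. Qed.

Lemma winv_cat u v : winv (u ++ v) = winv v ++ winv u.
Proof. by rewrite /winv map_cat rev_cat. Qed.

Lemma winvK : involutive winv.
Proof. by move=> w; rewrite /winv map_rev revK -map_comp (eq_map linvK) map_id. Qed.

Lemma size_winv w : size (winv w) = size w.
Proof. by rewrite /winv size_rev size_map. Qed.

Lemma all_winv (P : pred letter) w :
  (forall l, P l -> P (linv l)) -> all P w -> all P (winv w).
Proof. by move=> PV /allP Pw; rewrite /winv all_rev all_map; apply/allP=> l /Pw /PV. Qed.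

Definition cancel_free (w : word) := sorted (fun l l' => l' != linv l) w.

(* [reduce] keeps its output reversed on a stack: the top is the last letter read. *)
Definition reduced_stack (st : word) := sorted (fun l l' => l != linv l') st.

Lemma reduced_stack_red_step st l : reduced_stack st -> reduced_stack (red_step st l).
Proof.
case: st => [|l' st] //= st_ok; case: ifP => [_|/negbT l'l].
  by case: st st_ok => //= ? ? /andP[].
by rewrite /= st_ok eq_linvC l'l.
Qed.

Lemma reduced_stack_foldl st w : reduced_stack st -> reduced_stack (foldl red_step st w).
Proof. by elim: w st => //= l w IHw st /(reduced_stack_red_step l); apply: IHw. Qed.

Lemma cancel_free_reduce w : cancel_free (reduce w).
Proof. by rewrite /cancel_free rev_sorted; apply: reduced_stack_foldl. Qed.

Lemma foldl_push l st w : cancel_free (l :: w) ->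
  foldl red_step (l :: st) w = rev w ++ l :: st.
Proof.
elim: w l st => [|l' w IHw] l st //= /andP[ll' lw].
by rewrite eq_linvC (negbTE ll') IHw // rev_cons cat_rcons.
Qed.

Lemma reduce_id w : cancel_free w -> reduce w = w.
Proof.
by case: w => [|l w] // cfw; rewrite /reduce /= foldl_push // cats1 -rev_cons revK.
Qed.

Lemma reduceK w : reduce (reduce w) = reduce w.
Proof. exact/reduce_id/cancel_free_reduce. Qed.

Lemma size_foldl_red_step st w : size (foldl red_step st w) <= size st + size w.
Proof.
elim: w st => [|l w IHw] st /=; first by rewrite addn0.
apply: leq_trans (IHw _) _; case: st => [|l' st] //=.
by case: ifP => _ /=; lia.
Qed.

Lemma size_reduce w : size (reduce w) <= size w.
Proof. by rewrite /reduce size_rev; apply: leq_trans (size_foldl_red_step _ _) _. Qed.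

Lemma all_reduce (P : pred letter) w : all P w -> all P (reduce w).
Proof.
rewrite /reduce all_rev; have : all P [::] by [].
elim: w [::] => //= l w IHw st Pst /andP[Pl Pw]; apply: IHw Pw.
case: st Pst => [|l' st] /=; first by rewrite Pl.
by case: ifP => _ /andP[Pl' Pst] /=; rewrite ?Pl ?Pl' Pst.
Qed.

Lemma foldl_red_step_cancel_free st w : cancel_free w ->
  exists c, [/\ c <= size st, c <= size w &
    foldl red_step st w = rev (drop c w) ++ drop c st].
Proof.
elim: w st => [|l w IHw] st cflw /=; first by exists 0; rewrite !drop0.
have cfw : cancel_free w by move: cflw => /path_sorted.
case: st => [|l' st] /=.
  by exists 0; rewrite foldl_push // !drop0 cats0 rev_cons cats1.
case: ifP => _; last by exists 0; rewrite foldl_push // !drop0 rev_cons cat_rcons.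
by have [c [cst cw ->]] := IHw st cfw; exists c.+1.
Qed.

Lemma reduce_cat_cancel_free u v : cancel_free u -> cancel_free v ->
  exists c, [/\ c <= size u, c <= size v &
    reduce (u ++ v) = take (size u - c) u ++ drop c v].
Proof.
move=> cfu cfv; have [c [cu cv Ec]] := foldl_red_step_cancel_free (rev u) cfv.
exists c; rewrite size_rev in cu; split=> //.
have Eu : foldl red_step [::] u = rev u by rewrite -{2}(reduce_id cfu) /reduce revK.
by rewrite /reduce foldl_cat Eu Ec rev_cat revK drop_rev revK.
Qed.

Inductive deletes : word -> word -> Prop :=
| deletes_refl w : deletes w w
| deletes_pair u l v w : deletes (u ++ v) w -> deletes (u ++ l :: linv l :: v) w.

Lemma deletes_trans u v w : deletes u v -> deletes v w -> deletes u w.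
Proof. by elim=> // u' l v' w' _ IH /IH; apply: deletes_pair. Qed.

Lemma deletes_cat a b u v : deletes u v -> deletes (a ++ u ++ b) (a ++ v ++ b).
Proof.
elim=> [w|u' l v' w _ IH]; first exact: deletes_refl.
have -> : a ++ (u' ++ l :: linv l :: v') ++ b = (a ++ u') ++ l :: linv l :: (v' ++ b)
  by rewrite -!catA.
by apply: deletes_pair; rewrite -!catA in IH *.
Qed.

Lemma deletes_catl a u v : deletes u v -> deletes (a ++ u) (a ++ v).
Proof. by move/(deletes_cat a [::]); rewrite !cats0. Qed.

Lemma deletes_catr b u v : deletes u v -> deletes (u ++ b) (v ++ b).
Proof. exact: (deletes_cat [::] b). Qed.

Lemma red_stepK st l : reduced_stack st -> red_step (red_step st l) (linv l) = st.
Proof.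
case: st => [|l' st] /=; first by rewrite linvK eqxx.
case: ifP => [/eqP -> | _] /=; last by rewrite linvK eqxx.
case: st => [|l'' st] //= /andP[l'l'' _].
by rewrite eq_linvC (negbTE l'l'').
Qed.

Lemma reduce_deletes u v : deletes u v -> reduce u = reduce v.
Proof.
elim=> // u' l v' w _ IH; rewrite -IH /reduce !foldl_cat /= red_stepK //.
exact: reduced_stack_foldl.
Qed.

Lemma deletes_reduce w : deletes w (reduce w).
Proof.
suff gen st : deletes (rev st ++ w) (rev (foldl red_step st w)) by exact: gen [::].
elim: w st => [|l w IHw] st /=; first by rewrite cats0; exact: deletes_refl.
case: st => [|l' st] /=; first exact: IHw [:: l].
case: ifP => [/eqP ->|_]; last by have := IHw [:: l, l' & st]; rewrite rev_cons cat_rcons.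
rewrite rev_cons -cats1 -catA /= -{2}(linvK l).
exact/deletes_pair/IHw.
Qed.

Lemma reduce_cat u v : reduce (u ++ v) = reduce (reduce u ++ reduce v).
Proof.
apply: reduce_deletes; apply: deletes_trans (deletes_catr v (deletes_reduce u)) _.
exact/deletes_catl/deletes_reduce.
Qed.

Lemma reduce_catr u v : reduce (u ++ v) = reduce (u ++ reduce v).
Proof. exact/reduce_deletes/deletes_catl/deletes_reduce. Qed.

Lemma reduce_catm a u b : reduce (a ++ u ++ b) = reduce (a ++ reduce u ++ b).
Proof. exact/reduce_deletes/deletes_cat/deletes_reduce. Qed.

Lemma deletes_winvl w : deletes (winv w ++ w) [::].
Proof.
elim: w => [|l w IHw]; first exact: deletes_refl.
by rewrite /winv /= rev_cons -cats1 -catA /= -{2}(linvK l); apply: deletes_pair.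
Qed.

Lemma deletes_winvr w : deletes (w ++ winv w) [::].
Proof. by rewrite -{1}(winvK w); apply: deletes_winvl. Qed.

Lemma reduce_winvKl u v : reduce (winv u ++ u ++ v) = reduce v.
Proof. by rewrite catA; apply/reduce_deletes/(deletes_catr v (deletes_winvl u)). Qed.

Lemma reduce_winvKr u v : reduce (u ++ winv u ++ v) = reduce v.
Proof. by rewrite catA; apply/reduce_deletes/(deletes_catr v (deletes_winvr u)). Qed.

Lemma deletes_winv u v : deletes u v -> deletes (winv u) (winv v).
Proof.
elim=> [w|u' l v' w _ IH]; first exact: deletes_refl.
rewrite winv_cat -cat1s -[l :: _]cat1s -[linv l :: _]cat1s !winv_cat -!catA.
by rewrite /winv /= -/(winv _) linvK; apply: deletes_pair; rewrite -winv_cat.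
Qed.

Lemma cancel_free_winv w : cancel_free w -> cancel_free (winv w).
Proof.
rewrite /cancel_free /winv rev_sorted sorted_map; apply: sub_sorted => l l' /=.
by rewrite eq_linvC linvK; apply: contra => /eqP <-; rewrite linvK.
Qed.

Lemma reduce_winv w : reduce (winv w) = winv (reduce w).
Proof.
rewrite (reduce_deletes (deletes_winv (deletes_reduce w))).
exact/reduce_id/cancel_free_winv/cancel_free_reduce.
Qed.

Lemma size_reduce_cat u v : size (reduce (u ++ v)) <= size u + size v.
Proof. by rewrite -size_cat size_reduce. Qed.

Definition wdist (u v : word) : nat := size (Defs.mul (winv u) v).

Lemma wdistC u v : wdist u v = wdist v u.
Proof.
by rewrite /wdist /Defs.mul -[size (reduce _)]size_winv -reduce_winv winv_cat winvK.
Qed.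

Lemma wdist_triangle u v w : wdist u w <= wdist u v + wdist v w.
Proof.
rewrite /wdist /Defs.mul reduce_catr -(reduce_winvKr v w) -reduce_catr catA reduce_cat.
exact: size_reduce_cat.
Qed.

Lemma wdist_refl w : wdist w w = 0.
Proof. by rewrite /wdist /Defs.mul (reduce_deletes (deletes_winvl w)). Qed.

Lemma wdist_take_succ w i : wdist (take i w) (take i.+1 w) <= 1.
Proof.
rewrite /wdist /Defs.mul -addn1 takeD reduce_winvKl.
by apply: leq_trans (size_reduce _) _; rewrite size_take; case: ltnP.
Qed.

Lemma mul_winvK u v : reduce v = v -> Defs.mul u (Defs.mul (winv u) v) = v.
Proof. by move=> Hv; rewrite /Defs.mul -reduce_catr reduce_winvKr. Qed.

Lemma natinf_spec (P : nat -> Prop) m : P m ->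
  P (natinf P) /\ forall m', P m' -> natinf P <= m'.
Proof.
move=> Pm; apply: (epsilon_spec (inhabits 0)
  (fun n => P n /\ forall m', P m' -> n <= m')).
elim/ltn_ind: m Pm => m IHm Pm.
have [[m' [m'm Pm']]|no_less] := classic (exists m', m' < m /\ P m'); first exact: IHm Pm'.
exists m; split=> // m' Pm'; rewrite leqNgt; apply/negP => m'm.
by apply: no_less; exists m'.
Qed.

Section GeneratedSubgroup.

Variable S : seq word.

Definition gen_idx (t : seq (nat * bool)) := all (fun p => p.1 < size S) t.

Definition gen_letter (p : nat * bool) : word :=
  if p.2 then nth [::] S p.1 else winv (nth [::] S p.1).

Lemma evalSE t : evalS S t = reduce (flatten (map gen_letter t)).
Proof. by []. Qed.

Lemma evalS_cat t t' : evalS S (t ++ t') = Defs.mul (evalS S t) (evalS S t').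
Proof. by rewrite !evalSE map_cat flatten_cat reduce_cat. Qed.

Definition idx_inv (t : seq (nat * bool)) := rev (map (fun p => (p.1, ~~ p.2)) t).

Lemma evalS_idx_inv t : evalS S (idx_inv t) = winv (evalS S t).
Proof.
rewrite !evalSE -reduce_winv; congr reduce.
elim: t => [|[j s] t IHt] //=.
rewrite /idx_inv /= rev_cons map_rcons -cats1 flatten_cat -/(idx_inv t) IHt.
by rewrite /= cats0 winv_cat /gen_letter /=; case: s; rewrite ?winvK.
Qed.

Lemma gen_idx_inv t : gen_idx t -> gen_idx (idx_inv t).
Proof. by rewrite /gen_idx /idx_inv all_rev all_map. Qed.

Lemma gen_idx_cat t t' : gen_idx t -> gen_idx t' -> gen_idx (t ++ t').
Proof. by rewrite /gen_idx all_cat => -> ->. Qed.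

Lemma in_gen_evalS t : gen_idx t -> in_gen S (evalS S t).
Proof. by exists t. Qed.

Lemma in_gen_reduced w : in_gen S w -> reduce w = w.
Proof. by case=> t [_ ->]; rewrite reduceK. Qed.

Lemma in_gen_nil : in_gen S [::].
Proof. exact: (in_gen_evalS (t := [::])). Qed.

Lemma in_gen_divl u v : in_gen S u -> in_gen S v -> in_gen S (Defs.mul (winv u) v).
Proof.
move=> [t [It ->]] [t' [It' ->]]; exists (idx_inv t ++ t').
by rewrite evalS_cat evalS_idx_inv; split=> //; apply/gen_idx_cat/It'/gen_idx_inv.
Qed.

Lemma all_evalS (P : pred letter) t : (forall l, P l -> P (linv l)) ->
  (forall j, all P (nth [::] S j)) -> all P (evalS S t).
Proof.
move=> PV PS; apply: all_reduce; elim: t => [|[j s] t IHt] //=.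
by rewrite all_cat IHt andbT /gen_letter; case: s => //=; apply: all_winv.
Qed.

Definition gen_bound := foldr maxn 0 (map size S).

Lemma size_nth_gen_bound j : size (nth [::] S j) <= gen_bound.
Proof.
rewrite /gen_bound; elim: S j => [|s S' IHS] [|j] //=; rewrite ?nth_nil //.
  exact: leq_maxl.
exact: leq_trans (IHS j) (leq_maxr _ _).
Qed.

Lemma size_evalS t : size (evalS S t) <= gen_bound * size t.
Proof.
apply: leq_trans (size_reduce _) _; elim: t => [|[j s] t IHt] //=.
rewrite size_cat mulnS leq_add // /gen_letter; case: s; rewrite ?size_winv //.
all: exact: size_nth_gen_bound.
Qed.

Lemma distSE u v : distS S u v = distS S [::] (Defs.mul (winv u) v).
Proof. by rewrite /distS /Defs.mul /= reduceK. Qed.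

Lemma distS_le_size_idx t : gen_idx t -> distS S [::] (evalS S t) <= size t.
Proof.
move=> It; rewrite /distS; set P := (X in natinf X).
have Pt : P (size t) by exists t; rewrite /Defs.mul /= reduceK.
exact: (natinf_spec Pt).2 _ Pt.
Qed.

Lemma distS_geodesic w : in_gen S w ->
  exists t, [/\ gen_idx t, size t = distS S [::] w & evalS S t = w].
Proof.
move=> [t0 [It0 Ew]]; rewrite /distS; set P := (X in natinf X).
have P0 : P (size t0) by exists t0; rewrite /Defs.mul /= Ew reduceK.
have [[t [<- [It Et]]] _] := natinf_spec P0.
by exists t; rewrite Et /Defs.mul /= Ew reduceK.
Qed.

Lemma distS_nil : distS S [::] [::] = 0.
Proof. by apply/eqP; rewrite -leqn0; apply: (distS_le_size_idx (t := [::])). Qed.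

Lemma size_le_distS w : in_gen S w -> size w <= gen_bound * distS S [::] w.
Proof. by case/distS_geodesic=> t [_ <- <-]; apply: size_evalS. Qed.

Lemma distS_mul u v : in_gen S u -> in_gen S v ->
  distS S [::] (Defs.mul u v) <= distS S [::] u + distS S [::] v.
Proof.
case/distS_geodesic=> t [It <- <-]; case/distS_geodesic=> t' [It' <- <-].
by rewrite -size_cat -evalS_cat; apply/distS_le_size_idx/gen_idx_cat.
Qed.

Lemma distS_winv w : in_gen S w -> distS S [::] (winv w) <= distS S [::] w.
Proof.
case/distS_geodesic=> t [It <- <-]; rewrite -evalS_idx_inv.
rewrite -(size_map (fun p => (p.1, ~~ p.2))) -size_rev.
exact/distS_le_size_idx/gen_idx_inv.
Qed.

Lemma distS_le_add u v : in_gen S u -> in_gen S v ->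
  distS S u v <= distS S [::] u + distS S [::] v.
Proof.
move=> Su Sv; rewrite distSE.
have Su' : in_gen S (winv u).
  move: (in_gen_divl Su in_gen_nil).
  by rewrite /Defs.mul cats0 reduce_winv (in_gen_reduced Su).
exact: leq_trans (distS_mul Su' Sv) (leq_add (distS_winv Su) (leqnn _)).
Qed.

End GeneratedSubgroup.

(* The witness is the partial product of the generators preceding the one that
   contributes the last letter of the prefix. *)
Lemma prefix_near_subgroup S t : gen_idx S t ->
  forall i, exists q, in_gen S q /\ wdist q (take i (evalS S t)) <= gen_bound S.
Proof.
elim/last_ind: t => [_ i|t p IHt].
  by exists [::]; split; first exact: in_gen_nil.
rewrite /gen_idx all_rcons => /andP[Sp It] i.
rewrite -cats1 evalS_cat /Defs.mul.
set h := evalS S t; set s := evalS S [:: p].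
have size_s : size s <= gen_bound S by have := size_evalS S [:: p]; rewrite muln1.
have cfh : cancel_free h := cancel_free_reduce _.
have cfs : cancel_free s := cancel_free_reduce _.
have [c [ch cs ->]] := reduce_cat_cancel_free cfh cfs.
set m := size h - c.
have size_hm : size (take m h) = m by rewrite size_takel // leq_subr.
rewrite take_cat size_hm; case: ifP => im.
  have [q [Sq Hq]] := IHt It i; exists q; split=> //.
  by rewrite take_takel // ltnW.
exists h; split; first exact: in_gen_evalS.
rewrite /wdist /Defs.mul -{1}(cat_take_drop m h) winv_cat -catA.
rewrite reduce_catr reduce_winvKl -reduce_catr.
apply: leq_trans (size_reduce_cat _ _) _.
rewrite size_winv size_drop size_take size_drop; apply: leq_trans size_s.
by move: ch cs; rewrite /m; case: ifP; lia.
Qed.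

Section Undistorted.

Variables (S : seq word) (D : nat).
Hypothesis distS_short :
  forall w, in_gen S w -> size w <= (gen_bound S).*2.+1 -> distS S [::] w <= D.

Lemma distS_step q q' p p' : in_gen S q -> in_gen S q' ->
  wdist q p <= gen_bound S -> wdist p p' <= 1 -> wdist q' p' <= gen_bound S ->
  distS S [::] q' <= distS S [::] q + D.
Proof.
move=> Sq Sq' qp pp' q'p'.
have Sx := in_gen_divl Sq Sq'.
rewrite -{1}(mul_winvK q (in_gen_reduced Sq')).
apply: leq_trans (distS_mul Sq Sx) _; rewrite leq_add2l.
apply: distS_short => //; rewrite -/(wdist q q').
rewrite wdistC in q'p'; have := wdist_triangle q p q'; have := wdist_triangle p p' q'.
lia.
Qed.

Lemma distS_near_prefix t : gen_idx S t -> forall i q, in_gen S q ->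
  wdist q (take i (evalS S t)) <= gen_bound S -> distS S [::] q <= i.+1 * D.
Proof.
move=> It; elim=> [|i IHi] q' Sq' near_q'.
  rewrite mul1n -[D]add0n -(distS_nil S).
  rewrite take0 in near_q'.
  exact: (distS_step (in_gen_nil S) Sq' (p := [::]) (p' := [::])).
have [q [Sq near_q]] := prefix_near_subgroup It i.
rewrite mulSn addnC; apply: leq_trans (leq_add (IHi q Sq near_q) (leqnn D)).
exact: (distS_step Sq Sq' near_q (wdist_take_succ _ _) near_q').
Qed.

Lemma distS_le_size w : in_gen S w -> distS S [::] w <= (size w).*2 * D.
Proof.
move=> Sw; case: (Sw) => t [It Ew].
have := distS_near_prefix (i := size w) It Sw.
rewrite -Ew take_size wdist_refl => /(_ isT).
case: w {Sw Ew} => [|l w]; first by rewrite distS_nil.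
move=> /leq_trans -> //; rewrite leq_mul2r /=; lia.
Qed.

End Undistorted.

Lemma bounded_on_short_words (A : seq letter) (F : word -> nat) B :
  exists D, forall w, {subset w <= A} -> size w <= B -> F w <= D.
Proof.
elim: B F => [|B IHB] F.
  by exists (F [::]) => w _; rewrite leqn0 size_eq0 => /eqP ->.
have [D HD] : exists D, forall l w, l \in A -> {subset w <= A} -> size w <= B ->
    F (l :: w) <= D.
  elim: {-2}A => [|l0 A' [D HD]]; first by exists 0.
  have [D0 HD0] := IHB (fun w => F (l0 :: w)).
  exists (maxn D0 D) => l w; rewrite inE => /orP[/eqP -> | A'l] Aw Bw.
    exact: leq_trans (HD0 w Aw Bw) (leq_maxl _ _).
  exact: leq_trans (HD l w A'l Aw Bw) (leq_maxr _ _).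
exists (maxn (F [::]) D) => [[_ _|l w Alw Bw]]; first exact: leq_maxl.
have Aw : {subset w <= A} by move=> l' wl'; apply: Alw; rewrite inE wl' orbT.
exact: leq_trans (HD l w (Alw l (mem_head l w)) Aw Bw) (leq_maxr _ _).
Qed.

Definition gen_alphabet (S : seq word) : seq letter :=
  flatten S ++ map linv (flatten S).

Lemma in_gen_alphabet S w : in_gen S w -> {subset w <= gen_alphabet S}.
Proof.
case=> t [_ ->]; apply/allP; apply: all_evalS => [l|j].
  rewrite /gen_alphabet !mem_cat => /orP[Sl|/mapP[l' Sl' ->]].
    by rewrite map_f ?orbT.
  by rewrite linvK Sl'.
apply/allP=> l Sjl; rewrite /gen_alphabet mem_cat; apply/orP; left.
case: (ltnP j (size S)) => [jS|Sj]; last by rewrite nth_default in Sjl.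
by apply/flattenP; exists (nth [::] S j); rewrite ?mem_nth.
Qed.

Lemma distS_linear_bound S : exists D,
  forall w, in_gen S w -> distS S [::] w <= (size w).*2 * D.
Proof.
have [D HD] := bounded_on_short_words (gen_alphabet S) (distS S [::]) (gen_bound S).*2.+1.
by exists D; apply: distS_le_size => w Sw; apply/HD/in_gen_alphabet.
Qed.

(* The retraction of F(a,b,x,y) onto F(a,b) sending x to a and y to b; it kills
   every relator k psi(k)^-1 of the amalgam, hence all of relG. *)
Definition retract_letter (l : letter) : letter := (l.1 %% 2, l.2).
Definition retract (w : word) : word := map retract_letter w.

Lemma deletes_retract u v : deletes u v -> deletes (retract u) (retract v).
Proof.
elim=> [w|u' l v' w _ IH]; first exact: deletes_refl.
by rewrite /retract map_cat /=; apply: deletes_pair; rewrite -map_cat.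
Qed.

Lemma reduce_retract_reduce w : reduce (retract (reduce w)) = reduce (retract w).
Proof. by symmetry; apply/reduce_deletes/deletes_retract/deletes_reduce. Qed.

Lemma retract_cat u v : retract (u ++ v) = retract u ++ retract v.
Proof. exact: map_cat. Qed.

Lemma retract_winv w : retract (winv w) = winv (retract w).
Proof. by rewrite /retract /winv map_rev -!map_comp. Qed.

Lemma retract_F2 w : lettersF2 w -> retract w = w.
Proof.
elim: w => //= [[i s]] w IHw /andP[/= i2 F2w].
by rewrite IHw // /retract_letter /= modn_small.
Qed.

Lemma retract_shiftxy w : lettersF2 w -> retract (shiftxy w) = w.
Proof.
elim: w => //= [[i s]] w IHw /andP[/= i2 F2w].
by rewrite IHw // /retract_letter /= modnDr modn_small.
Qed.

Lemma relG_retract g u : (forall k, Kall g k -> lettersF2 k) ->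
  relG g u -> reduce (retract u) = [::].
Proof.
move=> KF2; elim=> {u} [k Kk||u v _ Hu _ Hv|u _ Hu|u w _ _ Hu] //.
- rewrite /Defs.mul reduce_retract_reduce retract_cat retract_winv.
  by rewrite retract_F2 ?retract_shiftxy ?KF2 // (reduce_deletes (deletes_winvr k)).
- by rewrite /Defs.mul reduce_retract_reduce retract_cat reduce_cat Hu Hv.
- by rewrite retract_winv reduce_winv Hu.
rewrite reduce_retract_reduce !retract_cat reduce_catm Hu retract_winv.
exact: reduce_deletes (deletes_winvl _).
Qed.

Lemma construction_gen_F2 g h c d N j : construction g h c d N ->
  0 < j -> lettersF2 (g j).
Proof.
case=> [[F2g1 _] [_ Hn]]; case: j => [|[|j]] // _.
by have [_ [[F2g _] _]] := Hn j.+1 isT.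
Qed.

Lemma Kn_lettersF2 g h c d N n w : construction g h c d N -> Kn g n w -> lettersF2 w.
Proof.
move=> Hc [t [_ ->]]; apply: all_evalS => // j.
case: (ltnP j (size (map g (iota 1 n)))) => [|jn]; last by rewrite nth_default.
rewrite size_map size_iota => jn; rewrite (nth_map 0) ?size_iota // nth_iota //.
exact: construction_gen_F2 Hc _.
Qed.

Lemma distG_F2 g h c d N k k' : construction g h c d N ->
  lettersF2 (Defs.mul (winv k) k') -> distG g k k' = wdist k k'.
Proof.
move=> Hc; rewrite /distG /wdist; set x := Defs.mul (winv k) k' => F2x.
set P := (X in natinf X).
have Px : P (size x).
  exists x; split=> //; split; first by apply: sub_all F2x => l /= /ltn_trans->.
  by rewrite /Defs.mul (reduce_deletes (deletes_winvl x)); apply: relG_nil.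
have [[w [<- [_ relw]]] min_w] := natinf_spec Px.
apply/eqP; rewrite eqn_leq min_w //=.
have KF2 k0 : Kall g k0 -> lettersF2 k0 by case=> n /(Kn_lettersF2 Hc).
have := relG_retract KF2 relw.
rewrite /Defs.mul reduce_retract_reduce retract_cat retract_winv (retract_F2 F2x).
move=> trivial.
have x_red : reduce x = x by rewrite reduceK.
rewrite -x_red -(reduce_winvKr (retract w) x) reduce_catr trivial cats0.
by apply: leq_trans (size_reduce _) _; rewrite size_map.
Qed.

Lemma K2_dist_comparable g h c d N S : construction g h c d N ->
  (forall w, Kn g 2 w -> in_gen S w) ->
  exists D L, forall k k', Kn g 2 k -> Kn g 2 k' ->
    distS S k k' <= D * distG g k k' /\ distG g k k' <= L * distS S k k'.
Proof.
move=> Hc K2S; have [D HD] := distS_linear_bound S.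
exists D.*2, (gen_bound S) => k k' Kk Kk'.
have F2x : lettersF2 (Defs.mul (winv k) k').
  apply/all_reduce; rewrite all_cat (Kn_lettersF2 Hc Kk' : all _ k') andbT.
  exact/all_winv/(Kn_lettersF2 Hc Kk).
have Sx := in_gen_divl (K2S _ Kk) (K2S _ Kk').
rewrite (distG_F2 Hc F2x) distSE /wdist; split.
  by apply: leq_trans (HD _ Sx) _; rewrite -!mul2n; lia.
exact: size_le_distS.
Qed.

Local Open Scope R_scope.

Lemma ratio_le_scale (m n K : nat) (M r : R) :
  (m <= K * n)%nat -> INR K <= M -> 0 < r -> INR m / r <= M * (INR n / r).
Proof.
move=> /leP /le_INR; rewrite mult_INR => mKn KM r_gt0.
rewrite /Rdiv -Rmult_assoc; apply/Rmult_le_compat_r/(Rle_trans _ _ _ mKn).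
  exact/Rlt_le/Rinv_0_lt_compat.
exact/Rmult_le_compat_r/KM/pos_INR.
Qed.

Lemma ratio_le (x y r : R) : 0 < r -> x <= y * r -> x / r <= y.
Proof.
move=> r_gt0 xyr; apply: (Rmult_le_reg_r r) => //.
by rewrite /Rdiv Rmult_assoc Rinv_l ?Rmult_1_r //; lra.
Qed.

Section Ultralimits.

Variable om : (nat -> Prop) -> Prop.
Hypothesis om_ultra : ultrafilter om.

Lemma ultra_mono (A B : nat -> Prop) : (forall n, A n -> B n) -> om A -> om B.
Proof. by case: om_ultra => _ [_ [mono _]]; apply: mono. Qed.

Lemma ultra_and (A B : nat -> Prop) : om A -> om B -> om (fun n => A n /\ B n).
Proof. by case: om_ultra => _ [_ [_ [inter _]]]; apply: inter. Qed.

Lemma ultra_nonempty (A : nat -> Prop) : om A -> exists n, A n.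
Proof.
move=> omA; apply: NNPP => noA; case: om_ultra => _ [om_false _]; apply: om_false.
by apply: ultra_mono omA => n An; apply: noA; exists n.
Qed.

Lemma ultra_dichotomy (A : nat -> Prop) : om A \/ om (fun n => ~ A n).
Proof. by case: om_ultra => _ [_ [_ [_ ultra]]]; apply: ultra. Qed.

(* The ultralimit is the supremum of the reals eventually below the sequence. *)
Lemma ulim_exists (a : nat -> R) (B : R) : (forall n, 0 <= a n) ->
  om (fun n => a n <= B) -> exists l, ulim om a l.
Proof.
move=> a_ge0 a_leB; pose E r := om (fun n => r <= a n).
have E_ub r : E r -> r <= B.
  move=> Er; apply: Rnot_lt_le => Br.
  by have [n [? ?]] := ultra_nonempty (ultra_and Er a_leB); lra.
have E0 : E 0 by apply: ultra_mono (proj1 om_ultra) => n _.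
have [l [l_ub l_least]] := completeness E (ex_intro _ B E_ub) (ex_intro _ 0 E0).
exists l => eps eps_gt0.
have above : om (fun n => l - eps < a n).
  apply: NNPP => not_above; suff : l <= l - eps by lra.
  apply: l_least => r Er; apply: Rnot_lt_le => lr; apply: not_above.
  by apply: ultra_mono Er => n; lra.
have below : om (fun n => a n < l + eps).
  case: (ultra_dichotomy (fun n => a n < l + eps)) => // not_below.
  suff : l + eps <= l by lra.
  by apply: l_ub; apply: ultra_mono not_below => n; lra.
by apply: ultra_mono (ultra_and above below) => n [? ?]; apply: Rabs_def1; lra.
Qed.

Lemma ulim_le_scale (a b : nat -> R) la lb M : ulim om a la -> ulim om b lb ->
  0 <= M -> (forall n, a n <= M * b n) -> la <= M * lb.
Proof.
move=> a_la b_lb M_ge0 ab; apply: Rnot_lt_le => lt_la.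
pose eps := (la - M * lb) / (2 * (1 + M)).
have eps_gt0 : 0 < eps by apply: Rdiv_lt_0_compat; lra.
have eps_def : eps * (2 * (1 + M)) = la - M * lb by rewrite /eps; field; lra.
have [n [/Rabs_def2 [? ?] /Rabs_def2 [? ?]]] :=
  ultra_nonempty (ultra_and (a_la eps eps_gt0) (b_lb eps eps_gt0)).
have := ab n; have : M * b n <= M * (lb + eps) by apply: Rmult_le_compat_l; lra.
nra.
Qed.

Variable dn : nat -> R.
Hypothesis dn_gt0 : forall n, 0 < dn n.

Lemma ulim_ratios_comparable (u v : nat -> nat) (D L : nat) (B : R) :
  (forall n, u n <= D * v n)%nat -> (forall n, v n <= L * u n)%nat ->
  om (fun n => INR (u n) <= B * dn n) ->
  exists lu lv, [/\ ulim om (fun n => INR (u n) / dn n) lu,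
    ulim om (fun n => INR (v n) / dn n) lv,
    lu <= INR (D + L).+1 * lv & lv <= INR (D + L).+1 * lu].
Proof.
move=> uv vu u_bounded; set M := INR (D + L).+1.
have [DM LM] : INR D <= M /\ INR L <= M by split; apply/le_INR; lia.
have ratio_ge0 (w : nat -> nat) n : 0 <= INR (w n) / dn n.
  by apply: Rmult_le_pos; [exact: pos_INR | exact/Rlt_le/Rinv_0_lt_compat].
have uv' n : INR (u n) / dn n <= M * (INR (v n) / dn n) by apply: ratio_le_scale.
have vu' n : INR (v n) / dn n <= M * (INR (u n) / dn n) by apply: ratio_le_scale.
have u_le : om (fun n => INR (u n) / dn n <= B).
  by apply: ultra_mono u_bounded => n; apply: ratio_le.
have v_le : om (fun n => INR (v n) / dn n <= M * B).
  apply: ultra_mono u_le => n u_le; apply: Rle_trans (vu' n) _.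
  exact/Rmult_le_compat_l/u_le/pos_INR.
have [lu u_lu] := ulim_exists (ratio_ge0 u) u_le.
have [lv v_lv] := ulim_exists (ratio_ge0 v) v_le.
exists lu, lv; split=> //.
  by apply: (ulim_le_scale u_lu v_lv); [exact: pos_INR | exact: uv'].
by apply: (ulim_le_scale v_lv u_lu); [exact: pos_INR | exact: vu'].
Qed.

End Ultralimits.

Local Close Scope R_scope.

Theorem proposition6p6
  (g h : nat -> word) (c d : nat -> letter) (N : nat -> nat)
  (Hcons : construction g h c d N)
  (S : seq word) (HS : forall s, s \in S -> Kn g 2 s)
  (HSgen : forall w, Kn g 2 w -> in_gen S w)
  (om : (nat -> Prop) -> Prop) (Hom : ultrafilter om) (Hnp : nonprincipal om)
  (dn : nat -> R) (Hdpos : forall n, (0 < dn n)%R)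
  (Hdinf : forall M : R, om (fun n => (M < dn n)%R)) :
  exists L : R, (0 < L)%R /\
    forall k k' : nat -> word,
      (forall n, Kn g 2 (k n)) -> (forall n, Kn g 2 (k' n)) ->
      (exists C : R, om (fun n => (INR (distS S [::] (k n)) <= C * dn n)%R)) ->
      (exists C : R, om (fun n => (INR (distS S [::] (k' n)) <= C * dn n)%R)) ->
      exists lK lG : R,
        ulim om (fun n => INR (distS S (k n) (k' n)) / dn n)%R lK /\
        ulim om (fun n => INR (distG g (k n) (k' n)) / dn n)%R lG /\
        (lK <= L * lG)%R /\ (lG <= L * lK)%R.
Proof.
have [D [L cmp]] := K2_dist_comparable Hcons HSgen.
exists (INR (D + L).+1); split; first exact/lt_0_INR/ltP.
move=> k k' Kk Kk' [C HC] [C' HC'].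
have bound : om (fun n => INR (distS S (k n) (k' n)) <= (C + C') * dn n)%R.
  apply: ultra_mono (ultra_and Hom HC HC') => // n [Cn C'n].
  rewrite Rmult_plus_distr_r; apply: Rle_trans (Rplus_le_compat _ _ _ _ Cn C'n).
  by rewrite -plus_INR; apply/le_INR/leP/distS_le_add; apply: HSgen.
have [lK [lG [? ? ? ?]]] := ulim_ratios_comparable Hom Hdpos
  (fun n => (cmp _ _ (Kk n) (Kk' n)).1) (fun n => (cmp _ _ (Kk n) (Kk' n)).2) bound.
by exists lK, lG.
Qed.
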